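(* Let $m,n\ge 2$ be natural numbers with $n=k(m-1)+m$ for some integer $k\ge 1$, and let $G\le\operatorname{Sym}(m)$. Let $H=G_{ext}\le\operatorname{Sym}(n)$ be the extended group of $G$, consisting of the permutations of $\{0,\dots,n-1\}$ that act as an element of $G$ on $\{0,\dots,m-1\}$ and as the identity on $\{m,\dots,n-1\}$. Then $V_m(G)$ embeds (as a group) in $V_n(H)$.
   Context: For $r\ge 2$ let $\mathcal{A}_r=\{0,1,\dots,r-1\}$, let $\mathcal{A}_r^*$ be the set of finite words over $\mathcal{A}_r$ (including the empty word), and let $\mathfrak{C}_r=\mathcal{A}_r^{\mathbb{N}}$ (infinite words, product topology). For $u\in\mathcal{A}_r^*$ and $v$ a finite or infinite word, $uv$ denotes concatenation, and $u\le_{pref} v$ means $v=uw$ for some word $w$. A (complete) prefix code of $\mathfrak{C}_r$ is a finite set $S\subset\mathcal{A}_r^*$ such that every $\zeta\in\mathfrak{C}_r$ has exactly one $s\in S$ with $s\le_{pref}\zeta$. A permutation $\sigma\in\operatorname{Sym}(r)$ acts on words letterwise: $\sigma(z_1z_2\cdots)=\sigma(z_1)\sigma(z_2)\cdots$. For $H\le\operatorname{Sym}(r)$, the symmetric Thompson group $V_r(H)$ is the group (under composition) of homeomorphisms of $\mathfrak{C}_r$ described by tables: two prefix codes $P=\{p_1,\dots,p_k\}$ and $Q=\{q_1,\dots,q_k\}$ of $\mathfrak{C}_r$ of the same size together with $\sigma_i,\tau_i\in H$, describing the homeomorphism $p_i\,\sigma_i(u)\mapsto q_i\,\tau_i(u)$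 for all $u\in\mathfrak{C}_r$ and all $i$. *)

From mathcomp Require Import all_boot all_fingroup.
Set Implicit Arguments. Unset Strict Implicit. Unset Printing Implicit Defensive.

Definition cantor (r : nat) := nat -> 'I_r.

Definition cat_inf (r : nat) (u : seq 'I_r) (z : cantor r) : cantor r :=
  fun i => if i < size u then nth (z 0) u i else z (i - size u).

Definition is_prefix (r : nat) (u : seq 'I_r) (z : cantor r) : Prop :=
  exists w : cantor r, z = cat_inf u w.

Definition act_inf (r : nat) (s : {perm 'I_r}) (z : cantor r) : cantor r :=
  fun i => s (z i).

Definition prefix_code (r : nat) (S : seq (seq 'I_r)) : Prop :=
  uniq S /\ forall z : cantor r, exists! s, s \in S /\ is_prefix s z.

Definition in_V (r : nat) (H : {perm 'I_r} -> Prop)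
    (f : cantor r -> cantor r) : Prop :=
  exists (P Q : seq (seq 'I_r)) (sg tau : seq {perm 'I_r}),
    [/\ size Q = size P, size sg = size P & size tau = size P] /\
    [/\ prefix_code P, prefix_code Q,
        (forall s, s \in sg -> H s), (forall t, t \in tau -> H t) &
        forall i, i < size P -> forall u : cantor r,
          f (cat_inf (nth [::] P i) (act_inf (nth 1%g sg i) u))
          = cat_inf (nth [::] Q i) (act_inf (nth 1%g tau i) u)].

Definition G_ext (m n : nat) (G : {set {perm 'I_m}}) (s : {perm 'I_n}) : Prop :=
  exists2 g, g \in G &
    (forall (j : 'I_m) (i : 'I_n), val i = val j -> val (s i) = val (g j)) /\
    (forall i : 'I_n, m <= val i -> s i = i).

From mathcomp Require Import all_boot all_fingroup zify.
From Stdlib Require Import FunctionalExtensionality ClassicalEpsilon.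
Set Implicit Arguments. Unset Strict Implicit. Unset Printing Implicit Defensive.

(* Write n = m + k(m-1): besides the m letters of A_m, the alphabet A_n has k(m-1)
   letters m + j(m-1) + (a-1), with 0 <= j < k and 0 < a < m.  On states
   J x C_n with |J| = k+1, a letter-by-letter decoder (state j > 0 emits 0 and
   moves to j-1; state 0 reads a plain letter a, emits it and moves to k, or
   reads the letter coding (j, a), emits a and moves to j) is a bijection
   J x C_n = A_m x (J x C_n), so every state decodes to a word of C_m and
   finite prefixes can be pushed into states and read back.  An element of
   V_m(G) replaces prefixes up to a permutation of A_m; recording that
   permutation in the state, it lifts to a map of Sym(m) x J x C_n.  Coding each
   label (g, j) by a word of a fixed length L embeds these states as finitely
   many cones of C_n; [phi f] acts there by the lift and fixes the other cones
   of depth L.  It is given by a table with trivial permutations, and it is an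
   injective homomorphism because decoding intertwines the lift with f and
   reaches every eventually constant word. *)

Section InfiniteWords.
Variable r : nat.
Implicit Types (b : 'I_r) (u w : seq 'I_r) (y z : cantor r) (s g : {perm 'I_r}).

Definition cons_inf b z : cantor r := fun t => if t is t'.+1 then z t' else b.
Definition take_inf t z : seq 'I_r := mkseq z t.
Definition drop_inf t z : cantor r := fun i => z (t + i).
Definition const_inf b : cantor r := fun _ => b.

Lemma cat_inf0 y : cat_inf [::] y = y.
Proof. by apply: functional_extensionality => t; rewrite /cat_inf subn0. Qed.

Lemma cat_inf_cons b u y : cat_inf (b :: u) y = cons_inf b (cat_inf u y).
Proof. by apply: functional_extensionality => -[|t] //; rewrite /cat_inf /= ltnS subSS. Qed.

Lemma cat_inf_cat u w y : cat_inf (u ++ w) y = cat_inf u (cat_inf w y).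
Proof. by elim: u => [|b u IH]; rewrite ?cat_inf0 // cat_cons !cat_inf_cons IH. Qed.

Lemma drop_cons_inf b z : drop_inf 1 (cons_inf b z) = z.
Proof. by []. Qed.

Lemma take_infS t z : take_inf t.+1 z = z 0 :: take_inf t (drop_inf 1 z).
Proof. by rewrite /take_inf /mkseq /= -[1]addn0 iotaDl -map_comp. Qed.

Lemma take_cat_inf u y : take_inf (size u) (cat_inf u y) = u.
Proof.
elim: u => [|b u IH] //.
by rewrite cat_inf_cons take_infS drop_cons_inf IH.
Qed.

Lemma size_take_inf t z : size (take_inf t z) = t.
Proof. exact: size_mkseq. Qed.

Lemma drop_cat_inf u y : drop_inf (size u) (cat_inf u y) = y.
Proof.
by apply: functional_extensionality => t; rewrite /drop_inf /cat_inf ltnNge leq_addr addKn.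
Qed.

Lemma cat_take_drop_inf t z : cat_inf (take_inf t z) (drop_inf t z) = z.
Proof.
apply: functional_extensionality => i; rewrite /cat_inf size_mkseq.
case: ltnP => hi; first by rewrite (set_nth_default (z 0)) ?size_mkseq // nth_mkseq.
by rewrite /drop_inf subnKC.
Qed.

Lemma cons_drop_inf z : cons_inf (z 0) (drop_inf 1 z) = z.
Proof. by apply: functional_extensionality => -[]. Qed.

Lemma take_infD t d z : take_inf (t + d) z = take_inf t z ++ take_inf d (drop_inf t z).
Proof.
by rewrite /take_inf /mkseq iotaD map_cat add0n -[in iota t d](addn0 t) iotaDl -map_comp.
Qed.

Lemma is_prefixE u z :
  is_prefix u z -> take_inf (size u) z = u /\ z = cat_inf u (drop_inf (size u) z).
Proof. by case=> w ->; rewrite take_cat_inf drop_cat_inf. Qed.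

Lemma act_inf1 z : act_inf 1 z = z.
Proof. by apply: functional_extensionality => i; rewrite /act_inf perm1. Qed.

Lemma act_infM s g z : act_inf g (act_inf s z) = act_inf (s * g) z.
Proof. by apply: functional_extensionality => i; rewrite /act_inf permM. Qed.

Lemma act_cat_inf s u z : act_inf s (cat_inf u z) = cat_inf (map s u) (act_inf s z).
Proof.
apply: functional_extensionality => i; rewrite /act_inf /cat_inf size_map.
by case: ifP => // hi; rewrite (nth_map (z 0)).
Qed.

Lemma take_act_inf s t z : take_inf t (act_inf s z) = map s (take_inf t z).
Proof. by rewrite /take_inf /mkseq -map_comp. Qed.

Lemma prefix_codeP (S : seq (seq 'I_r)) :
  uniq S ->
  (forall z, exists2 p, p \in S & is_prefix p z) ->
  (forall z p p', p \in S -> p' \in S -> is_prefix p z -> is_prefix p' z -> p = p') ->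
  prefix_code S.
Proof.
move=> uS ex un; split=> // z; have [p pS pz] := ex z.
by exists p; split=> // p' [p'S p'z]; exact: (un z).
Qed.

Lemma prefix_code_unique (S : seq (seq 'I_r)) z p p' :
  prefix_code S -> p \in S -> p' \in S -> is_prefix p z -> is_prefix p' z -> p = p'.
Proof. by case=> _ /(_ z) [p0 [_ e]] pS p'S pz p'z; rewrite -(e p) ?(e p'). Qed.

End InfiniteWords.

Section Cones.
Variable r : nat.
Implicit Types (u w : seq 'I_r) (f : cantor r -> cantor r) (s : {perm 'I_r}).

Definition cone_map f u w s := forall v, f (cat_inf u v) = cat_inf w (act_inf s v).

Definition cone_local f := forall z, exists t w s, cone_map f (take_inf t z) w s.

Lemma cone_map_takeD f z t w s d :
  cone_map f (take_inf t z) w s ->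
  cone_map f (take_inf (t + d) z) (w ++ map s (take_inf d (drop_inf t z))) s.
Proof. by move=> fts v; rewrite take_infD !cat_inf_cat fts act_cat_inf. Qed.

Lemma cone_map_comp f g u w w' s s' :
  cone_map g u w s -> cone_map f w w' s' -> cone_map (f \o g) u w' (s * s')%g.
Proof. by move=> hg hf v /=; rewrite hg hf act_infM. Qed.

Lemma cone_map_row (P Q : seq (seq 'I_r)) (sg tau : seq {perm 'I_r}) f i :
  (forall i, i < size P -> forall v,
     f (cat_inf (nth [::] P i) (act_inf (nth 1%g sg i) v))
     = cat_inf (nth [::] Q i) (act_inf (nth 1%g tau i) v)) ->
  i < size P ->
  cone_map f (nth [::] P i) (nth [::] Q i) ((nth 1%g sg i)^-1 * nth 1%g tau i)%g.
Proof.
move=> hf hi v; have := hf i hi (act_inf (nth 1%g sg i)^-1%g v).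
by rewrite act_infM mulVg act_inf1 act_infM.
Qed.

Lemma in_V_cone_local (H : {perm 'I_r} -> Prop) f : in_V H f -> cone_local f.
Proof.
case=> P [Q [sg [tau [_ [pcP _ _ _ hf]]]]] z.
have [p [[pP pz] _]] := pcP.2 z; set i := index p P.
exists (size p), (nth [::] Q i), ((nth 1%g sg i)^-1 * nth 1%g tau i)%g.
by rewrite (is_prefixE pz).1 -{1}(nth_index [::] pP); apply: cone_map_row; rewrite ?index_mem.
Qed.

Hypothesis r_gt1 : 1 < r.

Let a0 : 'I_r := Ordinal (ltnW r_gt1).
Let a1 : 'I_r := Ordinal r_gt1.

Lemma cat_const_inj u w s s' :
  (forall b, cat_inf u (act_inf s (const_inf b)) = cat_inf w (act_inf s' (const_inf b))) ->
  u = w /\ s = s'.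
Proof.
move=> H.
have Hs : size u = size w.
  wlog lt_uw : u w s s' H / size u < size w.
    move=> hw; case: (ltngtP (size u) (size w)) => // lt; first exact: hw H lt.
    by apply/esym; apply: (hw w u s' s) => // b; rewrite H.
  have key b : s b = nth a0 w (size u).
    have := congr1 (fun z => z (size u)) (H b); rewrite /cat_inf ltnn subnn lt_uw /act_inf.
    by move=> ->; apply: set_nth_default.
  by have /perm_inj := etrans (key a0) (esym (key a1)).
have Huw : u = w.
  apply: (eq_from_nth (x0 := a0)) => // i hi.
  have := congr1 (fun z => z i) (H a0); rewrite /cat_inf hi -Hs hi.
  by rewrite (set_nth_default a0) // [in RHS](set_nth_default a0) // -Hs.
split=> //; apply/permP => b.
by have := congr1 (fun z => z (size u)) (H b); rewrite /cat_inf ltnn Hs ltnn !subnn.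
Qed.

Lemma cone_map_unique f u w s w' s' :
  cone_map f u w s -> cone_map f u w' s' -> w = w' /\ s = s'.
Proof. by move=> h h'; apply: cat_const_inj => b; rewrite -h -h'. Qed.

Lemma cone_local_eq f g :
  cone_local f -> cone_local g ->
  (forall u b, f (cat_inf u (const_inf b)) = g (cat_inf u (const_inf b))) -> f = g.
Proof.
move=> lf lg fg; apply: functional_extensionality => z.
have [t1 [w1 [s1 hf]]] := lf z; have [t2 [w2 [s2 hg]]] := lg z.
move: hf hg => /(cone_map_takeD t2) hf /(cone_map_takeD t1); rewrite addnC => hg.
have [ew es] := cat_const_inj (fun b => etrans (esym (hf _)) (etrans (fg _ b) (hg _))).
by rewrite -(cat_take_drop_inf (t1 + t2) z) hf hg ew es.
Qed.

End Cones.

Section Decoder.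
Variables (m : nat) (X : Type) (step : X -> 'I_m * X) (unstep : 'I_m -> X -> X).
Hypothesis step_unstep : forall a x, step (unstep a x) = (a, x).
Hypothesis unstep_step : forall x, unstep (step x).1 (step x).2 = x.
Implicit Types (w : seq 'I_m) (x : X) (s : {perm 'I_m}) (f g : cantor m -> cantor m).

Definition advance t x := iter t (fun x => (step x).2) x.
Definition dec x : cantor m := fun t => (step (advance t x)).1.
Definition enc w x := foldr unstep x w.

Lemma advanceS t x : advance t.+1 x = advance t (step x).2.
Proof. exact: iterSr. Qed.

Lemma advanceD t d x : advance (t + d) x = advance d (advance t x).
Proof. by rewrite /advance addnC iterD. Qed.

Lemma dec_advance t x : dec (advance t x) = drop_inf t (dec x).
Proof. by apply: functional_extensionality => i; rewrite /dec -advanceD. Qed.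

Lemma dec_unstep a x : dec (unstep a x) = cons_inf a (dec x).
Proof.
by apply: functional_extensionality => -[|t]; rewrite /dec ?advanceS step_unstep.
Qed.

Lemma dec_enc w x : dec (enc w x) = cat_inf w (dec x).
Proof. by elim: w => [|a w IH]; rewrite ?cat_inf0 //= dec_unstep IH cat_inf_cons. Qed.

Lemma advance_enc w x : advance (size w) (enc w x) = x.
Proof. by elim: w => [|a w IH] //; rewrite (advanceS (size w)) step_unstep. Qed.

Lemma enc_take_dec t x : enc (take_inf t (dec x)) (advance t x) = x.
Proof.
elim: t x => [|t IH] x //.
rewrite take_infS advanceS -dec_advance /= IH.
exact: unstep_step.
Qed.

Lemma enc_cat w1 w2 x : enc (w1 ++ w2) x = enc w1 (enc w2 x).
Proof. exact: foldr_cat. Qed.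

Lemma dec_fixpoint x b : step x = (b, x) -> dec x = const_inf b.
Proof.
move=> fix_x; have adv t : advance t x = x.
  by elim: t => [|t IH] //; rewrite advanceS fix_x.
by apply: functional_extensionality => t; rewrite /dec adv fix_x.
Qed.

Definition tstate := ({perm 'I_m} * X)%type.
Implicit Types p : tstate.

Definition tdec p : cantor m := act_inf p.1 (dec p.2).
Definition tenc w p : tstate := (p.1, enc (map p.1^-1%g w) p.2).

Lemma tdec_tenc w p : tdec (tenc w p) = cat_inf w (tdec p).
Proof.
rewrite /tdec dec_enc act_cat_inf -map_comp map_id_in // => a _ /=.
by rewrite permKV.
Qed.

Lemma tenc_cat w1 w2 p : tenc (w1 ++ w2) p = tenc w1 (tenc w2 p).
Proof. by rewrite /tenc map_cat enc_cat. Qed.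

Lemma tenc_take_tdec t (g : {perm 'I_m}) x :
  tenc (take_inf t (tdec (g, x))) (g, advance t x) = (g, x).
Proof.
rewrite /tenc /tdec /= take_act_inf -map_comp map_id_in ?enc_take_dec // => a _ /=.
by rewrite permK.
Qed.

Lemma tenc_inj w : injective (tenc w).
Proof.
move=> [g x] [g' x'] [/= <-] /(congr1 (advance (size (map g^-1%g w)))).
by rewrite !advance_enc => ->.
Qed.

(* Junk [(0, [::], 1)] when [f] has no cone data at [z]. *)
Definition cone_data f z : nat * seq 'I_m * {perm 'I_m} :=
  epsilon (inhabits (0, [::], 1%g)) (fun d => cone_map f (take_inf d.1.1 z) d.1.2 d.2).

Lemma cone_dataP f z t w s :
  cone_map f (take_inf t z) w s ->
  let: (t', w', s') := cone_data f z in cone_map f (take_inf t' z) w' s'.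
Proof.
move=> h; have := epsilon_spec (inhabits (0, [::], 1%g))
  (fun d => cone_map f (take_inf d.1.1 z) d.1.2 d.2) (ex_intro _ (t, w, s) h).
by rewrite -/(cone_data f z); case: (cone_data f z) => [[]].
Qed.

Definition lift f p : tstate :=
  let: (t, w, s) := cone_data f (tdec p) in tenc w ((p.1 * s)%g, advance t p.2).

Hypothesis m_gt1 : 1 < m.

Lemma tenc_cone_extension f p t w s d w' s' :
  cone_map f (take_inf t (tdec p)) w s -> cone_map f (take_inf (t + d) (tdec p)) w' s' ->
  tenc w' ((p.1 * s')%g, advance (t + d) p.2) = tenc w ((p.1 * s)%g, advance t p.2).
Proof.
move=> h h'; have [-> ->] := cone_map_unique m_gt1 h' (cone_map_takeD d h).
rewrite tenc_cat advanceD; congr tenc.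
have -> : map s (take_inf d (drop_inf t (tdec p)))
          = take_inf d (tdec ((p.1 * s)%g, advance t p.2)).
  by rewrite /tdec /= dec_advance -act_infM take_act_inf.
exact: tenc_take_tdec.
Qed.

Lemma lift_cone_map f p t w s :
  cone_map f (take_inf t (tdec p)) w s -> lift f p = tenc w ((p.1 * s)%g, advance t p.2).
Proof.
move=> h; have := cone_dataP h.
rewrite /lift; case: (cone_data f _) => [[t' w'] s'] h'.
have [le | /ltnW le] := leqP t t'.
  by move: h'; rewrite -(subnKC le) => h'; apply: tenc_cone_extension.
by move: h; rewrite -(subnKC le) => h; symmetry; apply: tenc_cone_extension.
Qed.

Lemma lift_tenc f u w s (g : {perm 'I_m}) x :
  cone_map f u w s -> lift f (tenc u (g, x)) = tenc w ((g * s)%g, x).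
Proof.
move=> h; rewrite (@lift_cone_map _ _ (size u) w s) /=.
  by rewrite -(size_map g^-1%g) advance_enc.
by rewrite tdec_tenc take_cat_inf.
Qed.

Lemma tdec_lift f p : cone_local f -> tdec (lift f p) = f (tdec p).
Proof.
move=> /(_ (tdec p)) [t [w [s h]]].
rewrite (lift_cone_map h) tdec_tenc -[in RHS](cat_take_drop_inf t (tdec p)) h.
by rewrite /tdec /= dec_advance -act_infM.
Qed.

Lemma lift_comp f g p : cone_local f -> cone_local g -> lift (f \o g) p = lift f (lift g p).
Proof.
move=> lf lg; set z := tdec p.
have [t1 [w1 [s1 hg]]] := lg z; have [t2 [w2 [s2 hf]]] := lf (g z).
move/(cone_map_takeD t2): hg; set w1' := (w1 ++ _) => hg.
have [w2' hf'] : exists w2', cone_map f w1' w2' s2.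
  have le : t2 <= size w1' by rewrite size_cat size_map size_take_inf leq_addl.
  have gz : take_inf (size w1') (g z) = w1'.
    by rewrite -(cat_take_drop_inf (t1 + t2) z) hg take_cat_inf.
  by rewrite -gz -(subnKC le); eexists; apply: cone_map_takeD.
rewrite (lift_cone_map (cone_map_comp hg hf')) (lift_cone_map hg).
by rewrite (lift_tenc _ _ hf') mulgA.
Qed.

(* Decoding [tenc u (tperm b a, x0)] gives [u a a a ...], and cone-local maps are
   determined by their values on such words. *)
Lemma lift_inj x0 b f g :
  step x0 = (b, x0) -> cone_local f -> cone_local g -> lift f = lift g -> f = g.
Proof.
move=> fix_x0 lf lg fg; apply: (cone_local_eq m_gt1) => // u a.
have <- : tdec (tenc u (tperm b a, x0)) = cat_inf u (const_inf a).
  rewrite tdec_tenc /tdec (dec_fixpoint fix_x0); congr cat_inf.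
  by apply: functional_extensionality => i; apply: tpermL.
by rewrite -!tdec_lift ?fg.
Qed.

End Decoder.

Lemma G_ext1 m n (G : {group {perm 'I_m}}) : @G_ext m n G 1%g.
Proof. by exists 1%g; [exact: group1 | split=> [j i | i _]; rewrite !perm1]. Qed.

Section Machine.
Variables (m k n : nat).
Hypotheses (m_gt1 : 1 < m) (k_gt0 : 0 < k) (n_def : n = k * (m - 1) + m).

Lemma m_lt_n : m < n.
Proof. by rewrite n_def -{1}(add0n m) ltn_add2r muln_gt0 k_gt0 subn_gt0. Qed.

Let zero_m : 'I_m := Ordinal (ltnW m_gt1).
Let one_m : 'I_m := Ordinal m_gt1.
Let zero_n : 'I_n := Ordinal (ltn_trans (ltnW m_gt1) m_lt_n).
Let one_n : 'I_n := Ordinal (ltn_trans m_gt1 m_lt_n).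
Let m_n : 'I_n := Ordinal m_lt_n.

Definition J := 'I_k.+1.
Definition mstate := (J * cantor n)%type.

Definition plain (a : 'I_m) : 'I_n := widen_ord (ltnW m_lt_n) a.
Definition extra (j : J) (a : 'I_m) : 'I_n := insubd zero_n (m + j * (m - 1) + a.-1).
Definition extra_state (b : 'I_n) : J := inord ((b - m) %/ (m - 1)).
Definition extra_letter (b : 'I_n) : 'I_m := insubd zero_m ((b - m) %% (m - 1)).+1.

Lemma val_extra (j : J) (a : 'I_m) :
  j < k -> (extra j a : nat) = m + j * (m - 1) + a.-1.
Proof.
move=> lt_jk; rewrite val_insubd ifT // n_def; have := ltn_ord a.
have : j * (m - 1) + (m - 1) <= k * (m - 1) by rewrite -mulSnr leq_mul2r lt_jk orbT.
lia.
Qed.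

Lemma extra_stateK (j : J) (a : 'I_m) : j < k -> 0 < a -> extra_state (extra j a) = j.
Proof.
move=> lt_jk a_gt0; apply: ord_inj; rewrite /extra_state val_extra // -addnA addKn.
rewrite divnMDl ?subn_gt0 // divn_small ?addn0 ?inord_val //.
by have := ltn_ord a; lia.
Qed.

Lemma extra_letterK (j : J) (a : 'I_m) : j < k -> 0 < a -> extra_letter (extra j a) = a.
Proof.
move=> lt_jk a_gt0; apply: ord_inj; rewrite /extra_letter val_extra // -addnA addKn.
by rewrite modnMDl modn_small ?prednK ?val_insubd ?ltn_ord //; have := ltn_ord a; lia.
Qed.

Lemma val_extra_letter (b : 'I_n) : (extra_letter b : nat) = ((b - m) %% (m - 1)).+1.
Proof.
rewrite val_insubd ifT //; have := @ltn_pmod (b - m) (m - 1).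
by rewrite subn_gt0 => /(_ m_gt1); lia.
Qed.

Lemma extra_state_div_lt (b : 'I_n) : (b - m) %/ (m - 1) < k.
Proof.
rewrite ltn_divLR ?subn_gt0 //; have := ltn_ord b.
have : 0 < k * (m - 1) by rewrite muln_gt0 k_gt0 subn_gt0.
lia.
Qed.

Lemma val_extra_state (b : 'I_n) : (extra_state b : nat) = (b - m) %/ (m - 1).
Proof. by rewrite inordK // ltnW // ltnS extra_state_div_lt. Qed.

Lemma extra_state_lt (b : 'I_n) : extra_state b < k.
Proof. by rewrite val_extra_state extra_state_div_lt. Qed.

Lemma extra_letterKV (b : 'I_n) : m <= b -> extra (extra_state b) (extra_letter b) = b.
Proof.
move=> le_mb; apply: ord_inj; rewrite val_extra ?extra_state_lt // val_extra_letter.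
by rewrite val_extra_state /=; have := divn_eq (b - m) (m - 1); lia.
Qed.

Definition step (x : mstate) : 'I_m * mstate :=
  let: (j, y) := x in
  if 0 < (j : nat) then (zero_m, (inord j.-1, y))
  else if (y 0 : nat) < m then (insubd zero_m (y 0 : nat), (ord_max, drop_inf 1 y))
  else (extra_letter (y 0), (extra_state (y 0), drop_inf 1 y)).

Definition transition (a : 'I_m) (j : J) : J * seq 'I_n :=
  if j == ord_max then (ord0, [:: plain a])
  else if (a : nat) == 0 then (inord j.+1, [::])
  else (ord0, [:: extra j a]).

Definition unstep (a : 'I_m) (x : mstate) : mstate :=
  let: (j', e) := transition a x.1 in (j', cat_inf e x.2).

Definition unstep_word (a : 'I_m) (x : J * seq 'I_n) : J * seq 'I_n :=
  let: (j', e) := transition a x.1 in (j', e ++ x.2).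

Lemma lt_ord_max (j : J) : j != ord_max -> j < k.
Proof.
move=> ne; rewrite ltn_neqAle -ltnS ltn_ord andbT.
by apply: contra ne => /eqP e; apply/eqP/ord_inj.
Qed.

Lemma step_unstep a x : step (unstep a x) = (a, x).
Proof.
case: x => j y; rewrite /unstep /transition /=.
have [->|ne] := eqVneq j ord_max.
  by rewrite /= cat_inf_cons cat_inf0 /= ltn_ord valKd.
have lt_jk := lt_ord_max ne.
have [a0 | a_gt0] := eqVneq (a : nat) 0; rewrite /=.
  by rewrite inordK ?ltnS //= inord_val cat_inf0; congr (_, _); apply: ord_inj; rewrite a0.
rewrite cat_inf_cons cat_inf0 /= ltnNge.
have -> : m <= extra j a by rewrite val_extra // -addnA leq_addr.
by rewrite extra_letterK ?lt0n // extra_stateK ?lt0n.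
Qed.

Lemma unstep_step x : unstep (step x).1 (step x).2 = x.
Proof.
case: x => j y; rewrite /step /unstep /transition.
have [j0 | j_gt0] := posnP j; last first.
  have e : ((inord j.-1 : J) : nat) = j.-1 by rewrite inordK //; have := ltn_ord j; lia.
  rewrite /= ifF; last first.
    by apply/negbTE/eqP => /(congr1 (@nat_of_ord _)); rewrite e /=; have := ltn_ord j; lia.
  by rewrite /= cat_inf0; congr (_, _); apply: ord_inj; rewrite inordK e prednK.
have -> : j = ord0 by exact: ord_inj.
have [lt_y0m | le_my0] := ltnP (y 0) m.
  rewrite eqxx /= cat_inf_cons cat_inf0 -[in RHS](cons_drop_inf y); congr (_, cons_inf _ _).
  by apply: ord_inj; rewrite /= val_insubd lt_y0m.
have ne : extra_state (y 0) != ord_max by rewrite -val_eqE /= neq_ltn extra_state_lt.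
rewrite (negbTE ne) val_extra_letter /= cat_inf_cons cat_inf0 extra_letterKV //.
by rewrite cons_drop_inf.
Qed.

Definition enc_word (w : seq 'I_m) (j : J) := foldr unstep_word (j, [::]) w.

Lemma enc_cat_inf w j y :
  enc unstep w (j, y) = ((enc_word w j).1, cat_inf (enc_word w j).2 y).
Proof.
rewrite /enc /enc_word -[y in LHS]cat_inf0; elim: w => [|a w IH] //=.
rewrite IH /unstep /unstep_word /=.
by case: transition => j' e; rewrite cat_inf_cat.
Qed.

Definition base_state : mstate := (ord0, const_inf m_n).

Lemma step_base_state : step base_state = (one_m, base_state).
Proof.
rewrite /step /= ltnn; congr (_, (_, _)); apply: ord_inj.
  by rewrite val_extra_letter /= subnn mod0n.
by rewrite val_extra_state /= subnn div0n.
Qed.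

Definition label := ({perm 'I_m} * J)%type.
Definition L := #|{: label}|.

Definition code (i : label) : seq 'I_n :=
  nseq (enum_rank i) one_n ++ nseq (L - enum_rank i) zero_n.
Definition uncode (w : seq 'I_n) : option label := [pick i | code i == w].

Lemma size_code i : size (code i) = L.
Proof. by rewrite size_cat !size_nseq subnKC // ltnW. Qed.

Lemma code_inj : injective code.
Proof.
move=> i i' /(congr1 (count_mem one_n)).
by rewrite !count_cat !count_nseq /= !mul0n !addn0 !mul1n => /ord_inj/enum_rank_inj.
Qed.

Lemma uncode_code i : uncode (code i) = Some i.
Proof.
rewrite /uncode; case: pickP => [i' /eqP/code_inj -> // | /(_ i)].
by rewrite eqxx.
Qed.

Lemma uncode_Some w i : uncode w = Some i -> code i = w.
Proof. by rewrite /uncode; case: pickP => // i' /eqP <- [<-]. Qed.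

Definition embed (p : {perm 'I_m} * mstate) : cantor n :=
  cat_inf (code (p.1, p.2.1)) p.2.2.

Definition phi (f : cantor m -> cantor m) (z : cantor n) : cantor n :=
  if uncode (take_inf L z) is Some i
  then embed (lift step unstep f (i.1, (i.2, drop_inf L z))) else z.

Lemma take_embed p : take_inf L (embed p) = code (p.1, p.2.1).
Proof. by rewrite /embed -(size_code (p.1, p.2.1)) take_cat_inf. Qed.

Lemma embed_inj : injective embed.
Proof.
move=> [g [j y]] [g' [j' y']] e.
have := take_embed (g, (j, y)); rewrite e take_embed => /code_inj [eg ej]; subst g' j'.
move: e => /(congr1 (drop_inf L)).
by rewrite /embed /= -(size_code (g, j)) !drop_cat_inf => ->.
Qed.

Lemma embed_uncode z i :
  uncode (take_inf L z) = Some i -> embed (i.1, (i.2, drop_inf L z)) = z.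
Proof.
by move/uncode_Some; rewrite /embed -surjective_pairing => ->; apply: cat_take_drop_inf.
Qed.

Lemma phi_embed f p : phi f (embed p) = embed (lift step unstep f p).
Proof.
case: p => g [j y]; rewrite /phi take_embed uncode_code /=.
by rewrite /embed /= -(size_code (g, j)) drop_cat_inf.
Qed.

Lemma phi_uncoded f z : uncode (take_inf L z) = None -> phi f z = z.
Proof. by rewrite /phi => ->. Qed.

Lemma phi_comp f g : cone_local f -> cone_local g -> phi (f \o g) = phi f \o phi g.
Proof.
move=> lf lg; apply: functional_extensionality => z /=.
case ez: (uncode (take_inf L z)) => [i|]; last by rewrite !(phi_uncoded _ ez).
by rewrite -(embed_uncode ez) !phi_embed (lift_comp step_unstep unstep_step m_gt1).
Qed.

Lemma phi_inj f g : cone_local f -> cone_local g -> phi f = phi g -> f = g.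
Proof.
move=> lf lg fg; apply: (lift_inj step_unstep unstep_step m_gt1 step_base_state) => //.
by apply: functional_extensionality => p; apply: embed_inj; rewrite -!phi_embed fg.
Qed.

Definition cone_word (p : seq 'I_m) (i : label) : seq 'I_n :=
  let: (j', e) := enc_word (map i.1^-1%g p) i.2 in code (i.1, j') ++ e.

Lemma cat_cone_word p i y :
  cat_inf (cone_word p i) y = embed (tenc unstep p (i.1, (i.2, y))).
Proof.
by rewrite /embed /tenc /= enc_cat_inf /cone_word; case: enc_word => j' e; rewrite cat_inf_cat.
Qed.

Lemma phi_cone_word f p q s i y :
  cone_map f p q s ->
  phi f (cat_inf (cone_word p i) y) = cat_inf (cone_word q ((i.1 * s)%g, i.2)) y.
Proof.
move=> h; rewrite !cat_cone_word phi_embed.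
by rewrite (lift_tenc step_unstep unstep_step m_gt1 _ _ h).
Qed.

Lemma uncode_cone_word p i y : uncode (take_inf L (cat_inf (cone_word p i) y)) != None.
Proof. by rewrite cat_cone_word take_embed uncode_code. Qed.

Lemma cone_word_inj C p p' i i' y y' :
  prefix_code C -> p \in C -> p' \in C ->
  cat_inf (cone_word p i) y = cat_inf (cone_word p' i') y' -> p = p' /\ i = i'.
Proof.
move=> pcC pC p'C; rewrite !cat_cone_word => /embed_inj e.
have ep : p = p'.
  apply: (prefix_code_unique (z := tdec step (tenc unstep p (i.1, (i.2, y))))) pcC pC p'C _ _.
    by rewrite (tdec_tenc step_unstep); eexists.
  by rewrite e (tdec_tenc step_unstep); eexists.
subst p'; split=> //; move: e => /(tenc_inj step_unstep) [].
by case: i i' => [g j] [g' j'] /= -> ->.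
Qed.

Lemma coded_cone_word C z i :
  prefix_code C -> uncode (take_inf L z) = Some i ->
  exists p j y, p \in C /\ z = cat_inf (cone_word p (i.1, j)) y.
Proof.
move=> pcC ez; set x := (i.2, drop_inf L z).
have [p [[pC /is_prefixE [tp _]] _]] := pcC.2 (tdec step (i.1, x)).
exists p, (advance step (size p) x).1, (advance step (size p) x).2; split=> //.
rewrite cat_cone_word /= -surjective_pairing -[X in tenc unstep X _]tp.
by rewrite (tenc_take_tdec unstep_step) embed_uncode.
Qed.

Definition uncoded : seq (seq 'I_n) :=
  map val [seq w : L.-tuple 'I_n <- enum {: L.-tuple 'I_n} | uncode w == None].

Lemma mem_uncoded w : (w \in uncoded) = (size w == L) && (uncode w == None).
Proof.
apply/mapP/andP => [[t] | [sw uw]].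
  by rewrite mem_filter => /andP [uw _] ->; rewrite size_tuple.
by exists (Tuple sw); rewrite // mem_filter mem_enum uw.
Qed.

Lemma uniq_uncoded : uniq uncoded.
Proof. by rewrite (map_inj_uniq val_inj) filter_uniq ?enum_uniq. Qed.

Lemma uncoded_prefix w z :
  w \in uncoded -> is_prefix w z -> take_inf L z = w /\ uncode (take_inf L z) = None.
Proof.
rewrite mem_uncoded => /andP [/eqP sw /eqP uw] /is_prefixE [tw _].
by rewrite -sw tw.
Qed.

Definition cone_rows (N : nat) : seq (nat * label) :=
  [seq (a, b) | a <- iota 0 N, b <- enum {: label}].

Lemma mem_cone_rows N x : (x \in cone_rows N) = (x.1 < N).
Proof.
apply/allpairsP/idP => [[[a b] [/= aN _ ->]] | xN].
  by rewrite mem_iota in aN.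
by exists x; rewrite mem_iota mem_enum xN -surjective_pairing.
Qed.

Lemma uniq_cone_rows N : uniq (cone_rows N).
Proof.
by apply: allpairs_uniq; rewrite ?iota_uniq ?enum_uniq // => -[? ?] [? ?] _ _ [-> ->].
Qed.

Definition cone_table (C : seq (seq 'I_m)) (rho : nat -> label -> label) :
  seq (seq 'I_n) :=
  [seq cone_word (nth [::] C x.1) (rho x.1 x.2) | x <- cone_rows (size C)] ++ uncoded.

Section ConeTable.
Variables (C : seq (seq 'I_m)) (rho : nat -> label -> label).
Hypotheses (pcC : prefix_code C) (rho_inj : forall a, injective (rho a)).

Let coded := [seq cone_word (nth [::] C x.1) (rho x.1 x.2) | x <- cone_rows (size C)].

Let mem_coded w :
  w \in coded -> exists a b, a < size C /\ w = cone_word (nth [::] C a) (rho a b).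
Proof. by case/mapP => -[a b]; rewrite mem_cone_rows => aC ->; exists a, b. Qed.

Let coded_uncoded z w w' :
  w \in coded -> w' \in uncoded -> is_prefix w z -> is_prefix w' z -> False.
Proof.
move=> /mem_coded [a [b [_ ->]]] w'U [y ->] /(uncoded_prefix w'U) [_].
by move/eqP; rewrite (negbTE (uncode_cone_word _ _ _)).
Qed.

Lemma uniq_cone_table : uniq (cone_table C rho).
Proof.
rewrite cat_uniq uniq_uncoded andbT; apply/andP; split.
  rewrite map_inj_in_uniq ?uniq_cone_rows // => -[a b] [a' b'].
  rewrite !mem_cone_rows /= => aC a'C /(congr1 (fun w => cat_inf w (const_inf zero_n))).
  case/(cone_word_inj pcC (mem_nth _ aC) (mem_nth _ a'C)) => /eqP.
  by rewrite nth_uniq ?pcC.1 // => /eqP <- /rho_inj ->.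
apply/hasP => -[w wU wC].
have wz : is_prefix w (cat_inf w (const_inf zero_n)) by exists (const_inf zero_n).
exact: (coded_uncoded wC wU wz wz).
Qed.

Lemma prefix_code_cone_table : prefix_code (cone_table C rho).
Proof.
apply: prefix_codeP uniq_cone_table _ _ => [z | z w w'].
  case ez: (uncode (take_inf L z)) => [i|]; last first.
    exists (take_inf L z); last by exists (drop_inf L z); rewrite cat_take_drop_inf.
    by rewrite mem_cat mem_uncoded size_take_inf ez eqxx orbT.
  have [p [j [y [pC ->]]]] := coded_cone_word pcC ez.
  have [rho' _ rhoK] := injF_bij (@rho_inj (index p C)).
  exists (cone_word p (i.1, j)); last by exists y.
  rewrite mem_cat; apply/orP; left; apply/mapP; exists (index p C, rho' (i.1, j)).
    by rewrite mem_cone_rows index_mem.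
  by rewrite /= nth_index ?rhoK.
rewrite !mem_cat => /orP [wC | wU] /orP [w'C | w'U] wz w'z.
- have [a [b [aC ew]]] := mem_coded wC; have [a' [b' [a'C ew']]] := mem_coded w'C.
  move: wz w'z => [y ez] [y' ez']; move: (etrans (esym ez) ez'); rewrite ew ew'.
  by case/(cone_word_inj pcC (mem_nth _ aC) (mem_nth _ a'C)) => -> ->.
- by case: (coded_uncoded wC w'U wz w'z).
- by case: (coded_uncoded w'C wU w'z wz).
- by rewrite -(uncoded_prefix wU wz).1 -(uncoded_prefix w'U w'z).1.
Qed.

End ConeTable.

Lemma in_V_phi (H : {perm 'I_m} -> Prop) (H' : {perm 'I_n} -> Prop) f :
  H' 1%g -> in_V H f -> in_V H' (phi f).
Proof.
move=> H'1 [P [Q [sg [tau [[sQ _ _] [pcP pcQ _ _ hf]]]]]].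
set th := fun a => ((nth 1%g sg a)^-1 * nth 1%g tau a)%g.
set P' := cone_table P (fun _ i => i).
set Q' := cone_table Q (fun a i => ((i.1 * th a)%g, i.2)).
have sQ' : size Q' = size P' by rewrite /P' /Q' /cone_table !size_cat !size_map sQ.
exists P', Q', (nseq (size P') 1%g), (nseq (size P') 1%g).
split; first by rewrite !size_nseq.
split; [ | | by move=> s /nseqP [-> _] .. |].
- by apply: prefix_code_cone_table => // a ? ?.
- by apply: prefix_code_cone_table => // a [g j] [g' j'] [/mulIg -> ->].
move=> i iP u; rewrite !nth_nseq iP act_inf1 /P' /Q' /cone_table sQ !nth_cat !size_map.
have [i_rows | rows_i] := ltnP i (size (cone_rows (size P))).
  rewrite !(nth_map (0, (1%g, ord0))) //.
  have := mem_nth (0, (1%g, ord0)) i_rows; rewrite mem_cone_rows => xP.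
  exact: phi_cone_word (cone_map_row hf xP).
have iU : i - size (cone_rows (size P)) < size uncoded.
  by move: iP; rewrite /P' /cone_table size_cat size_map; lia.
by rewrite phi_uncoded // (uncoded_prefix (mem_nth [::] iU) (ex_intro _ u erefl)).2.
Qed.

End Machine.

Theorem theorem1p2 (m n k : nat) (G : {group {perm 'I_m}}) :
  2 <= m -> 2 <= n -> 1 <= k -> n = k * (m - 1) + m ->
  exists phi : (cantor m -> cantor m) -> (cantor n -> cantor n),
    [/\ (forall f, in_V (fun g => g \in G) f -> in_V (@G_ext m n G) (phi f)),
        (forall f g, in_V (fun x => x \in G) f -> in_V (fun x => x \in G) g ->
           phi (f \o g) = phi f \o phi g) &
        (forall f g, in_V (fun x => x \in G) f -> in_V (fun x => x \in G) g ->
           phi f = phi g -> f = g)].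
Proof.
move=> m_gt1 _ k_gt0 n_def.
exists (phi m_gt1 k_gt0 n_def); split=> [f fV | f g fV gV | f g fV gV].
- exact: in_V_phi (G_ext1 n G) fV.
- by apply: phi_comp; [apply: in_V_cone_local fV | apply: in_V_cone_local gV].
- by apply: phi_inj; [apply: in_V_cone_local fV | apply: in_V_cone_local gV].
Qed.
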